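(* If $d$ is unknown, then any non-adaptive deterministic group testing algorithm on $n$ items that detects one defective item must make at least $\Omega(n)$ tests.
   Context: Group testing: items $X=[n]$, unknown defective set $I\subseteq X$ with $d=|I|$. A test $Q\subseteq X$ has answer $1$ if $Q\cap I\neq\emptyset$ and $0$ otherwise. A non-adaptive algorithm fixes all its tests in advance, then computes its output from the answers. ''$d$ is unknown'' means the algorithm gets no information about $|I|$ and must, for every nonempty defective set $I\subseteq[n]$, output an element of $I$. *)

From mathcomp Require Import all_boot.
Set Implicit Arguments. Unset Strict Implicit. Unset Printing Implicit Defensive.

(* Items are 'I_n. A non-adaptive algorithm with m tests is a family of tests
   Q : 'I_m -> {set 'I_n} fixed in advance, plus a decoder mapping the answer
   vector to an item. *)

Definition test_answer (n : nat) (Q I : {set 'I_n}) : bool := Q :&: I != set0.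

Definition answers (n m : nat) (Q : 'I_m -> {set 'I_n}) (I : {set 'I_n})
  : {ffun 'I_m -> bool} := [ffun i => test_answer (Q i) I].

(* The algorithm (Q, dec) detects one defective item with d unknown:
   for every nonempty defective set I, the output lies in I. *)
Definition detects_one_defective (n m : nat) (Q : 'I_m -> {set 'I_n})
  (dec : {ffun 'I_m -> bool} -> 'I_n) : Prop :=
  forall I : {set 'I_n}, I != set0 -> dec (answers Q I) \in I.

From mathcomp Require Import all_boot zify.

Set Implicit Arguments.
Unset Strict Implicit.
Unset Printing Implicit Defensive.

(* Removing the reported item [x] from a defective set [I] with at least two
   elements leaves a nonempty defective set whose answers must differ, since
   the decoder would otherwise report [x] again, which is no longer defective.
   As the positive tests can only shrink, they shrink strictly, so the full
   set [ [set: 'I_n] ] has at least [n - 1] positive tests among the [m]. *)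

Section PositiveTests.

Variables (n m : nat) (Q : 'I_m -> {set 'I_n}).

Definition positive_tests (I : {set 'I_n}) : {set 'I_m} :=
  [set i | test_answer (Q i) I].

Lemma positive_testsS (I J : {set 'I_n}) :
  I \subset J -> positive_tests I \subset positive_tests J.
Proof.
move=> sIJ; apply/subsetP => i; rewrite !inE /test_answer => /set0Pn [x].
by rewrite inE => /andP [xQ /(subsetP sIJ) xJ]; apply/set0Pn; exists x; rewrite inE xQ.
Qed.

Lemma answers_positive_tests (I J : {set 'I_n}) :
  positive_tests I = positive_tests J -> answers Q I = answers Q J.
Proof.
move=> eqIJ; apply/ffunP => i; rewrite !ffunE.
by move/setP/(_ i): eqIJ; rewrite !inE.
Qed.

Variable dec : {ffun 'I_m -> bool} -> 'I_n.
Hypothesis detects : detects_one_defective Q dec.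

Lemma card_decodedD1 (I : {set 'I_n}) :
  0 < #|I| -> #|I| = #|I :\ dec (answers Q I)|.+1.
Proof.
rewrite card_gt0 => /detects xI.
by rewrite [LHS](cardsD1 (dec (answers Q I))) xI.
Qed.

Lemma positive_tests_removal (I : {set 'I_n}) :
  1 < #|I| -> positive_tests (I :\ dec (answers Q I)) \proper positive_tests I.
Proof.
move=> lt1I; set x := dec (answers Q I).
rewrite properEneq positive_testsS ?subD1set // andbT.
apply/eqP => /answers_positive_tests eq_ans.
have I'0 : I :\ x != set0 by rewrite -card_gt0 -ltnS -card_decodedD1 // ltnW.
by have := detects I'0; rewrite eq_ans -/x !inE eqxx.
Qed.

Lemma card_positive_tests (I : {set 'I_n}) : #|I|.-1 <= #|positive_tests I|.
Proof.
have [k] := ubnP #|I|; elim: k I => // k IH I ltIk.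
have [|lt1I] := leqP #|I| 1; first lia.
have cardI := card_decodedD1 (ltnW lt1I).
have IH' := IH (I :\ dec (answers Q I)).
have := proper_card (positive_tests_removal lt1I); lia.
Qed.

Lemma detects_one_defective_tests : n.-1 <= m.
Proof.
rewrite -[n in n.-1]card_ord -cardsT -[m]card_ord.
exact: leq_trans (card_positive_tests _) (max_card _).
Qed.

End PositiveTests.

Theorem theorem10 :
  exists k N0 : nat, 0 < k /\
    forall (n m : nat) (Q : 'I_m -> {set 'I_n})
           (dec : {ffun 'I_m -> bool} -> 'I_n),
      N0 <= n -> detects_one_defective Q dec -> n <= k * m.
Proof.
exists 2, 2; split=> // n m Q dec le2n detects.
have := detects_one_defective_tests detects; lia.
Qed.
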